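(* Let $\psi:S_X\to\mathbb{R}$ be bounded and measurable, $\sigma_X=(\sigma_X^0,\sigma_X[\cdot,\cdot])$ a memory-one strategy for $X$, and $\sigma_Y$ any behavioral strategy for $Y$, generating the measures $\nu_t$. Then $$\sum_{t=0}^\infty\lambda^t\int_{S_X\times S_Y}\Big[\psi(x)-\lambda\int_{S_X}\psi(s)\,d\sigma_X[x,y](s)\Big]\,d\nu_t(x,y)=\int_{S_X}\psi(s)\,d\sigma_X^0(s).$$
   Context: Standing framework. Let $S_X,S_Y$ be measurable spaces, and $\lambda\in(0,1)$. For $T\ge 0$ let $\mathcal{H}^T=(S_X\times S_Y)^T$ ($\mathcal{H}^0=\{\varnothing\}$) and $\mathcal{H}=\bigsqcup_{T\ge0}\mathcal{H}^T$. A behavioral strategy for $X$ (resp. $Y$) is a Markov kernel from $\mathcal{H}$ to $S_X$ (resp. $S_Y$). A memory-one strategy for $X$ is a behavioral strategy determined by a probability measure $\sigma_X^0$ on $S_X$ (used at the empty history) and a Markov kernel $(x,y)\mapsto\sigma_X[x,y]$ from $S_X\times S_Y$ to $S_X$, with $\sigma_X[h^T]=\sigma_X[x_{T-1},y_{T-1}]$ for $h^T=((x_0,y_0),\dots,(x_{T-1},y_{T-1}))$, $T\ge1$. Given behavioral strategies $\sigma_X,\sigma_Y$, put $\sigma(h)=\sigma_X[h]\otimes\sigma_Y[h]$ and define probability measures $\mu_t$ on $\mathcal{H}^{t+1}$ by $\mu_0=\sigma(\varnothing)$ and $\mu_t(E'\times E)=\int_{E'}\sigma(h)(E)\,d\mu_{t-1}(h)$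 (uniquely extended). Let $\nu_t(E)=\mu_t(\mathcal{H}^t\times E)$ be the distribution of the action pair at time $t$. *)

From HB Require Import structures.
From mathcomp Require Import all_boot all_order all_algebra.
From mathcomp Require Import all_classical all_reals all_analysis.
Set Implicit Arguments. Unset Strict Implicit. Unset Printing Implicit Defensive.
Import Order.TTheory GRing.Theory Num.Theory.
Import numFieldNormedType.Exports.
Local Open Scope classical_set_scope.
Local Open Scope ring_scope.

Section Histories.
Context (dX dY : measure_display) (SX : measurableType dX) (SY : measurableType dY).

(* H^0 = {empty history} (unit), H^(T+1) = H^T x (S_X x S_Y), with the
   product sigma-algebras. *)
Fixpoint histM (t : nat) : {d : measure_display & measurableType d} :=
  match t with
  | 0 => existT (fun d => measurableType d) _ unit
  | t'.+1 => existT (fun d => measurableType d) _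
               ((projT2 (histM t')) * (SX * SY))%type
  end.

Definition hist (t : nat) : measurableType (projT1 (histM t)) := projT2 (histM t).

Context (R : realType).

(* The behavioral strategy of X induced by a memory-one strategy
   (s0, k): s0 at the empty history, k (x_{T-1}, y_{T-1}) at histories of
   length T >= 1. *)
Definition memory_one (s0 : probability SX R) (k : R.-pker (SX * SY) ~> SX)
  (t : nat) : hist t -> set SX -> \bar R :=
  match t return hist t -> set SX -> \bar R with
  | 0 => fun _ => s0
  | t'.+1 => fun h => k h.2
  end.

(* A behavioral strategy for Y: a Markov (probability) kernel on the disjoint
   union of the H^T, i.e. one probability kernel H^T ~> S_Y for each T. *)
Definition behavioral_Y := forall t : nat, R.-pker (hist t) ~> SY.

Section Process.
Context (s0 : probability SX R) (k : R.-pker (SX * SY) ~> SX) (sY : behavioral_Y).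

Definition sigma (t : nat) (h : hist t) : set (SX * SY) -> \bar R :=
  (memory_one s0 k h \x sY t h)%E.

(* hmu t is the law of the history of length t: hmu 0 = Dirac at the empty
   history, hmu (t+1) = mu_t, i.e.
   mu_t(A) = int_{H^t} sigma(h)({z | (h,z) in A}) d mu_{t-1}(h). *)
Fixpoint hmu (t : nat) : set (hist t) -> \bar R :=
  match t return set (hist t) -> \bar R with
  | 0 => fun A => (\d_ tt) A
  | t'.+1 => fun A => (\int[@hmu t']_h @sigma t' h (xsection A h))%E
  end.

(* nu_t(E) = mu_t(H^t x E): law of the action pair at time t *)
Definition nu (t : nat) : set (SX * SY) -> \bar R :=
  fun E => @hmu t.+1 (setT `*` E).

End Process.
End Histories.

(* Write alpha_t for the integral of psi(x) against nu_t.  Because X plays a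
   memory-one strategy, the action x_{t+1} is drawn from sigma_X[x_t, y_t], so
   the X-marginal of nu_{t+1} is the nu_t-average of sigma_X[x, y]: the
   integral of x, y |-> int psi d(sigma_X[x, y]) against nu_t is alpha_{t+1},
   and alpha_0 = int psi d(sigma_X^0).  The t-th summand is therefore
   lam^t alpha_t - lam^(t+1) alpha_(t+1), the partial sums telescope to
   alpha_0 - lam^n alpha_n, and |alpha_n| <= sup |psi| makes the remainder
   vanish. *)

From HB Require Import structures.
From mathcomp Require Import all_boot all_order all_algebra.
From mathcomp Require Import all_classical all_reals all_analysis.
From mathcomp Require Import measurable_realfun ring.
Set Implicit Arguments. Unset Strict Implicit. Unset Printing Implicit Defensive.
Import Order.TTheory GRing.Theory Num.Theory.
Import numFieldNormedType.Exports.
Local Open Scope classical_set_scope.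
Local Open Scope ring_scope.

Lemma cvg_discounted_telescope (R : realType) (lam M : R) (a : nat -> R) :
  0 <= lam -> lam < 1 -> (forall n, `|a n| <= M) ->
  (fun n => \sum_(0 <= t < n) lam ^+ t * (a t - lam * a t.+1)) @ \oo --> a 0.
Proof.
move=> lam0 lam1 aM.
have -> : (fun n => \sum_(0 <= t < n) lam ^+ t * (a t - lam * a t.+1)) =
    (fun n => a 0 - lam ^+ n * a n).
  apply/funext => n.
  rewrite (@telescope_sumr_eq _ 0 n (fun t => - (lam ^+ t * a t)))//.
    by rewrite expr0 mul1r opprK addrC.
  by move=> t _; rewrite exprSr; ring.
rewrite -[X in _ --> X]subr0; apply: cvgB; first exact: cvg_cst.
apply/norm_cvg0P; apply: (@squeeze_cvgr _ _ _ _ (cst 0) (fun n => M * lam ^+ n)).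
- apply: nearW => n; rewrite normr_ge0 normrM ger0_norm ?exprn_ge0//.
  by rewrite mulrC ler_wpM2r ?exprn_ge0.
- exact: cvg_cst.
- rewrite -(mulr0 M); apply: cvgMl_tmp; apply: cvg_expr.
  by rewrite ger0_norm.
Qed.

Local Open Scope ereal_scope.

Section kconst.
Context d d' (X : measurableType d) (Y : measurableType d') (R : realType).
Variable P : probability Y R.
Definition kconst :=
  kprobability (measurable_cst (P : pprobability Y R) : measurable_fun [set: X] _).
End kconst.
Arguments kconst {d d'} X {Y R} P.

Section kprecomp.
Context d d' d'' (X : measurableType d) (Y : measurableType d')
  (Z : measurableType d'') (R : realType).
Variables (k : R.-pker Y ~> Z) (f : X -> Y).

Definition kprecomp (mf : measurable_fun [set: X] f) :
  X -> {measure set Z -> \bar R} := fun x => k (f x).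

Hypothesis mf : measurable_fun [set: X] f.

Let measurable_kprecomp U :
  measurable U -> measurable_fun [set: X] (kprecomp mf ^~ U).
Proof. by move=> mU; exact: measurableT_comp (measurable_kernel k U mU) mf. Qed.

HB.instance Definition _ :=
  isKernel.Build _ _ X Z R (kprecomp mf) measurable_kprecomp.

Let kprecomp_prob x : kprecomp mf x [set: Z] = 1.
Proof. exact: prob_kernel. Qed.

HB.instance Definition _ :=
  Kernel_isProbability.Build _ _ X Z R (kprecomp mf) kprecomp_prob.
End kprecomp.

Section memory.
Context (R : realType) (dX dY : measure_display) (SX : measurableType dX)
  (SY : measurableType dY) (s0 : probability SX R) (k : R.-pker (SX * SY) ~> SX).

Definition memory_one_kernel (t : nat) : R.-pker (hist SX SY t) ~> SX :=
  match t with
  | 0 => kconst _ s0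
  | t'.+1 => kprecomp k (@measurable_snd _ _ (hist SX SY t') (SX * SY)%type)
  end.

Lemma memory_oneE t (h : hist SX SY t) :
  memory_one s0 k h = memory_one_kernel t h.
Proof. by case: t h. Qed.
End memory.

(* [hmu] and [nu] are set functions defined on all sets; they become
   probabilities by borrowing the structure of a measure that they agree with
   on measurable sets. *)
Section agree_probability.
Context d (T : measurableType d) (R : realType).
Variables (m : {measure set T -> \bar R}) (f : set T -> \bar R).

Definition agree_probability (f_m : forall A, measurable A -> f A = m A)
  (f_ge0 : forall A, 0 <= f A) (fT : f setT = 1) : set T -> \bar R := f.

Hypotheses (f_m : forall A, measurable A -> f A = m A)
  (f_ge0 : forall A, 0 <= f A) (fT : f setT = 1).

Let agree0 : agree_probability f_m f_ge0 fT set0 = 0.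
Proof. by rewrite /agree_probability f_m// measure0. Qed.

Let agree_sigma_additive :
  semi_sigma_additive (agree_probability f_m f_ge0 fT).
Proof.
move=> F mF tF mUF; rewrite /agree_probability f_m//.
under eq_fun do under eq_bigr do rewrite f_m//.
exact: measure_semi_sigma_additive.
Qed.

HB.instance Definition _ := isMeasure.Build _ _ _
  (agree_probability f_m f_ge0 fT) agree0 f_ge0 agree_sigma_additive.

HB.instance Definition _ :=
  Measure_isProbability.Build _ _ _ (agree_probability f_m f_ge0 fT) fT.
End agree_probability.

Section bounded_integral.
Context d (T : measurableType d) (R : realType).
Variable mu : {measure set T -> \bar R}.
Hypothesis mu1 : mu setT = 1.
Variables (f : T -> R) (M : R).
Hypotheses (mf : measurable_fun setT f) (fM : forall x, (`|f x| <= M)%R).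

Lemma integrable_bounded : mu.-integrable setT (EFin \o f).
Proof.
apply: measurable_bounded_integrable => //; first by rewrite mu1 ltry.
exists M; split; first exact: num_real.
by move=> r Mr x _; exact: le_trans (fM x) (ltW Mr).
Qed.

Lemma fin_num_integral_bounded : \int[mu]_x (f x)%:E \is a fin_num.
Proof. exact: integrable_fin_num integrable_bounded. Qed.

Lemma abs_fine_integral_bounded : (`|fine (\int[mu]_x (f x)%:E)| <= M)%R.
Proof.
rewrite -lee_fin -abse_EFin fineK ?fin_num_integral_bounded//.
apply: (le_trans (le_abse_integral _ _ _)) => //; first exact/measurable_EFinP.
have -> : M%:E = \int[mu]_x (cst M%:E) x by rewrite integral_cst// mu1 mule1.
apply: ge0_le_integral => //; first exact/measurableT_comp/measurable_EFinP.
by move=> x _; rewrite abse_EFin lee_fin.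
Qed.
End bounded_integral.

Lemma integralD_cst d (T : measurableType d) (R : realType)
    (mu : {measure set T -> \bar R}) (f : T -> R) (c M : R) :
  mu setT = 1 -> measurable_fun setT f -> (forall x, (`|f x| <= M)%R) ->
  \int[mu]_x (f x + c)%:E = \int[mu]_x (f x)%:E + c%:E.
Proof.
move=> mu1 mf fM.
under eq_integral do rewrite EFinD.
rewrite (integralD_EFin _ (integrable_bounded mu1 mf fM)
  (integrable_bounded mu1 (measurable_cst c) (fun=> lexx `|c|%R)))//=.
by rewrite integral_cst// mu1 mule1.
Qed.

Section kernel_mean.
Context d d' (X : measurableType d) (Y : measurableType d') (R : realType).
Variables (k : R.-pker X ~> Y) (psi : Y -> R) (M : R).
Hypotheses (mpsi : measurable_fun setT psi) (psiM : forall y, (`|psi y| <= M)%R).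

Let shift_ge0 y : 0 <= (psi y + M)%:E.
Proof. by rewrite lee_fin -lerBlDr sub0r; exact: lerNnormlW. Qed.

Let mshift : measurable_fun setT (fun y => (psi y + M)%:E).
Proof. by apply/measurable_EFinP; apply: measurable_funD. Qed.

Lemma kernel_integral_shift x :
  \int[k x]_y (psi y + M)%:E = (fine (\int[k x]_y (psi y)%:E) + M)%:E.
Proof.
by rewrite (integralD_cst M (prob_kernel x) mpsi psiM) EFinD fineK//
  (fin_num_integral_bounded (prob_kernel x) mpsi psiM).
Qed.

Lemma measurable_kernel_mean :
  measurable_fun setT (fun x => fine (\int[k x]_y (psi y)%:E)).
Proof.
have -> : (fun x => fine (\int[k x]_y (psi y)%:E)) =
    (fun x => fine (\int[k x]_y (psi y + M)%:E) - M)%R.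
  by apply/funext => x; rewrite kernel_integral_shift /= addrK.
apply: measurable_funB => //; apply: measurableT_comp => //.
exact: measurable_fun_integral_kernel (measurable_kernel k) _ shift_ge0 mshift.
Qed.

Lemma abs_kernel_mean_le x : (`|fine (\int[k x]_y (psi y)%:E)| <= M)%R.
Proof. exact: (abs_fine_integral_bounded (prob_kernel x) mpsi psiM). Qed.

(* Signed payoffs reduce to the nonnegative case after shifting by the bound M. *)
Lemma integral_kernel_mean d'' (Z : measurableType d'') (pi : Z -> Y)
    (mu : {measure set Z -> \bar R}) (nu : {measure set X -> \bar R}) :
  measurable_fun setT pi -> mu setT = 1 -> nu setT = 1 ->
  (forall phi : Y -> \bar R, (forall y, 0 <= phi y) -> measurable_fun setT phi ->
    \int[mu]_z phi (pi z) = \int[nu]_x \int[k x]_y phi y) ->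
  \int[mu]_z (psi (pi z))%:E = \int[nu]_x (fine (\int[k x]_y (psi y)%:E))%:E.
Proof.
move=> mpi mu1 nu1 mu_nu.
have := mu_nu _ shift_ge0 mshift.
rewrite (integralD_cst M mu1 (measurableT_comp mpsi mpi) (fun z => psiM (pi z))).
rewrite (eq_integral _ _ (fun x _ => kernel_integral_shift x)).
rewrite (integralD_cst M nu1 measurable_kernel_mean abs_kernel_mean_le).
by move/(congr1 (fun e => e - M%:E)); rewrite !addeK.
Qed.
End kernel_mean.

Section process.
Context (R : realType) (dX dY : measure_display) (SX : measurableType dX)
  (SY : measurableType dY) (s0 : probability SX R) (k : R.-pker (SX * SY) ~> SX)
  (sY : behavioral_Y SX SY R).

Definition sigma_kernel t := mkproduct (memory_one_kernel s0 k t)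
  (kprecomp (sY t) (@measurable_fst _ _ (hist SX SY t) SX)).

HB.instance Definition _ t := Kernel.on (@sigma_kernel t).

Lemma sigmaE t (h : hist SX SY t) B : measurable B ->
  sigma s0 k sY h B = sigma_kernel h B.
Proof.
move=> mB; rewrite /sigma memory_oneE /product_measure1 /= /kproduct.
apply: eq_integral => x _; rewrite /kernel.intker_indic /=.
rewrite -(setIT (xsection B x)) -integral_indic//; last exact: measurable_xsection.
by apply: eq_integral => y _; rewrite !indicE mem_xsection.
Qed.

Lemma sigma_ge0 t (h : hist SX SY t) B : 0 <= sigma s0 k sY h B.
Proof.
rewrite /sigma memory_oneE /product_measure1.
by apply: integral_ge0 => x _; exact: measure_ge0.
Qed.

Lemma sigmaT t (h : hist SX SY t) : sigma s0 k sY h setT = 1.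
Proof.
rewrite /sigma memory_oneE /product_measure1 /=.
under eq_integral do rewrite -(preimage_setT snd) xsection_preimage_snd prob_kernel.
by rewrite integral_cst// mul1e prob_kernel.
Qed.

Let sigma_kernel_prob t (h : hist SX SY t) : sigma_kernel h [set: SX * SY] = 1.
Proof. by rewrite -sigmaE// sigmaT. Qed.

HB.instance Definition _ t := Kernel_isProbability.Build _ _ _ _ R
  (@sigma_kernel t) (@sigma_kernel_prob t).

(* The kernel compositions of the library are parameterized; the trivial
   parameter space [unit] turns them into plain measures. *)
Let sigma_snd t :=
  kprecomp (@sigma_kernel t) (@measurable_snd _ _ unit (hist SX SY t)).

Section next_law.
Variables (t : nat) (P : probability (hist SX SY t) R).

Let next A := \int[P]_h sigma s0 k sY h (xsection A h).

Let next_ge0 A : 0 <= next A.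
Proof. by apply: integral_ge0 => h _; exact: sigma_ge0. Qed.

Let next_measure A :
  measurable A -> next A = mkproduct (kconst unit P) (@sigma_snd t) tt A.
Proof.
move=> mA; rewrite /next /= /kproduct; apply: eq_integral => h _.
rewrite sigmaE; last exact: measurable_xsection.
rewrite /kernel.intker_indic /= -(setIT (xsection A h)) -integral_indic//.
  by apply: eq_integral => z _; rewrite !indicE mem_xsection.
exact: measurable_xsection.
Qed.

Let nextT : next setT = 1.
Proof.
rewrite /next.
under eq_integral do rewrite -(preimage_setT snd) xsection_preimage_snd sigmaT.
by rewrite integral_cst// mul1e; exact: probability_setT.
Qed.

Definition next_law : probability (hist SX SY t.+1) R :=
  agree_probability next_measure next_ge0 nextT.

Lemma next_lawE A : next_law A = \int[P]_h sigma s0 k sY h (xsection A h).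
Proof. by []. Qed.
End next_law.

Lemma hmu_probability t :
  exists P : probability (hist SX SY t) R, @hmu _ _ _ _ R s0 k sY t = P.
Proof.
elim: t => [|t [P IH]]; first by exists (\d_ tt : probability unit R).
by exists (next_law P); apply/funext => A; rewrite next_lawE /= IH.
Qed.

Definition law t : probability (hist SX SY t) R :=
  projT1 (cid (hmu_probability t)).

Lemma hmuE t : @hmu _ _ _ _ R s0 k sY t = law t.
Proof. exact: projT2 (cid (hmu_probability t)). Qed.

Lemma nuE t E : nu s0 k sY t E = law t.+1 (snd @^-1` E).
Proof. by rewrite /nu hmuE setTX. Qed.

Let nu_ge0 t E : 0 <= nu s0 k sY t E.
Proof. by rewrite nuE; exact: measure_ge0. Qed.

Let nu_setT t : nu s0 k sY t setT = 1.
Proof. by rewrite nuE preimage_setT; exact: probability_setT. Qed.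

Let nu_kcomp t E :
  measurable E -> nu s0 k sY t E = mkcomp (kconst unit (law t)) (@sigma_snd t) tt E.
Proof.
move=> mE; rewrite nuE -hmuE /= hmuE /kcomp /=.
by apply: eq_integral => h _; rewrite xsection_preimage_snd sigmaE.
Qed.

Definition nu_law t : probability (SX * SY)%type R :=
  agree_probability (nu_kcomp t) (nu_ge0 t) (nu_setT t).

Lemma integral_nu_law t (f : SX * SY -> \bar R) :
  (forall z, 0 <= f z) -> measurable_fun setT f ->
  \int[nu_law t]_z f z = \int[law t]_h \int[sigma_kernel h]_z f z.
Proof.
move=> f0 mf.
transitivity (\int[mkcomp (kconst unit (law t)) (@sigma_snd t) tt]_z f z).
  by apply: eq_measure_integral => E mE _; exact: nu_kcomp.
exact: integral_kcomp.
Qed.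

Lemma sigma_kernel_fst t (h : hist SX SY t) A : measurable A ->
  sigma_kernel h (fst @^-1` A) = memory_one_kernel s0 k t h A.
Proof.
move=> mA; rewrite -sigmaE; last by rewrite -setXT; exact: measurableX.
rewrite /sigma memory_oneE /product_measure1 /= -setXT.
rewrite -[in RHS](setIT A) -integral_indic//; apply: eq_integral => x _.
have [xA|xA] := boolP (x \in A).
  by rewrite in_xsectionX// prob_kernel indicE xA.
by rewrite notin_xsectionX// measure0 indicE (negbTE xA).
Qed.

Lemma integral_sigma_kernel_fst t (h : hist SX SY t) (phi : SX -> \bar R) :
  (forall x, 0 <= phi x) -> measurable_fun setT phi ->
  \int[sigma_kernel h]_z phi z.1 = \int[memory_one_kernel s0 k t h]_x phi x.
Proof.
move=> phi0 mphi.
transitivity (\int[pushforward (sigma_kernel h) fst]_x phi x).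
  by rewrite ge0_integral_pushforward// preimage_setT.
by apply: eq_measure_integral => A mA _; rewrite /= /pushforward sigma_kernel_fst.
Qed.

Lemma integral_nu_law_fst t (phi : SX -> \bar R) :
  (forall x, 0 <= phi x) -> measurable_fun setT phi ->
  \int[nu_law t]_z phi z.1 =
  \int[law t]_h \int[memory_one_kernel s0 k t h]_x phi x.
Proof.
move=> phi0 mphi; rewrite integral_nu_law//; last exact: measurableT_comp.
by under eq_integral do rewrite integral_sigma_kernel_fst//.
Qed.

Section payoff.
Variables (psi : SX -> R) (M : R).
Hypotheses (mpsi : measurable_fun setT psi) (psiM : forall x, (`|psi x| <= M)%R).

Let alpha t := fine (\int[nu_law t]_z (psi z.1)%:E).

Lemma integral_nu_law_payoff t : \int[nu_law t]_z (psi z.1)%:E =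
  \int[law t]_h (fine (\int[memory_one_kernel s0 k t h]_x (psi x)%:E))%:E.
Proof.
exact: (integral_kernel_mean mpsi psiM measurable_fst (probability_setT (nu_law t))
  (probability_setT (law t)) (integral_nu_law_fst t)).
Qed.

Lemma integral_nu_law0_payoff :
  \int[nu_law 0]_z (psi z.1)%:E = \int[s0]_x (psi x)%:E.
Proof.
rewrite integral_nu_law_payoff /=.
rewrite (eq_integral (cst (fine (\int[s0]_x (psi x)%:E))%:E))// integral_cst//.
rewrite -[RHS]mule1 fineK; last first.
  exact: (fin_num_integral_bounded (probability_setT s0) mpsi psiM).
by congr (_ * _); exact: probability_setT.
Qed.

Lemma integral_nu_lawS_payoff t : \int[nu_law t.+1]_z (psi z.1)%:E =
  \int[nu_law t]_z (fine (\int[k z]_x (psi x)%:E))%:E.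
Proof.
rewrite integral_nu_law_payoff.
rewrite (eq_measure_integral (pushforward (law t.+1) snd)); last first.
  by move=> E _ _; exact: nuE.
rewrite integral_pushforward ?preimage_setT//.
- exact/measurable_EFinP/measurable_kernel_mean.
- apply: (integrable_bounded (probability_setT (law t.+1))
    (measurableT_comp (measurable_kernel_mean k mpsi psiM) measurable_snd)).
  by move=> h; exact: abs_kernel_mean_le.
Qed.

Lemma abs_alpha_le t : (`|alpha t| <= M)%R.
Proof.
exact: (abs_fine_integral_bounded (probability_setT (nu_law t))
  (measurableT_comp mpsi measurable_fst) (fun z => psiM z.1)).
Qed.

Lemma discounted_payoff_term (lam : R) t :
  fine (\int[nu s0 k sY t]_z ((psi z.1 - lam * fine (\int[k z]_x (psi x)%:E))%:E)) =
  (alpha t - lam * alpha t.+1)%R.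
Proof.
have payoffE t' : \int[nu_law t']_z (psi z.1)%:E = (alpha t')%:E.
  by rewrite fineK// (fin_num_integral_bounded (probability_setT (nu_law t'))
    (measurableT_comp mpsi measurable_fst) (fun z => psiM z.1)).
have mmean := measurable_kernel_mean k mpsi psiM.
have int_payoff := integrable_bounded (probability_setT (nu_law t))
  (measurableT_comp mpsi measurable_fst) (fun z => psiM z.1).
have int_mean := integrable_bounded (probability_setT (nu_law t)) mmean
  (abs_kernel_mean_le k mpsi psiM).
have scaledM z : (`|lam * fine (\int[k z]_x (psi x)%:E)| <= `|lam| * M)%R.
  by rewrite normrM ler_wpM2l// abs_kernel_mean_le.
have int_scaled := integrable_bounded (probability_setT (nu_law t))
  (measurable_funM (measurable_cst lam) mmean) scaledM.
have -> : nu s0 k sY t = nu_law t :> (set (SX * SY) -> \bar R) by [].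
under eq_integral do rewrite EFinB.
rewrite (integralB_EFin _ int_payoff int_scaled)//.
under [X in _ - X]eq_integral do rewrite EFinM.
rewrite (integralZl _ int_mean)// -integral_nu_lawS_payoff !payoffE.
by rewrite -EFinM -EFinB.
Qed.
End payoff.
End process.

Local Close Scope ereal_scope.

Theorem proposition1 (R : realType) (dX dY : measure_display)
  (SX : measurableType dX) (SY : measurableType dY) (lam : R)
  (psi : SX -> R) (s0 : probability SX R) (k : R.-pker (SX * SY) ~> SX)
  (sY : behavioral_Y SX SY R) :
  0 < lam < 1 ->
  measurable_fun setT psi ->
  (exists M : R, forall x, `|psi x| <= M) ->
  (fun n : nat => \sum_(0 <= t < n)
      lam ^+ t * fine (\int[nu s0 k sY t]_z
         ((psi z.1 - lam * fine (\int[k z]_s (psi s)%:E))%:E))%E)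
    @ \oo --> fine (\int[s0]_s (psi s)%:E)%E.
Proof.
move=> /andP[lam_gt0 lam_lt1] mpsi [M psiM].
under eq_fun do under eq_bigr do
  rewrite (discounted_payoff_term s0 k sY mpsi psiM).
rewrite -(integral_nu_law0_payoff s0 k sY mpsi psiM).
exact: cvg_discounted_telescope (ltW lam_gt0) lam_lt1
  (abs_alpha_le s0 k sY mpsi psiM).
Qed.
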